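(* Let $0\le s\le w\le n$ and let $T$ be a family of distinct $w$-subsets of $[n]$ such that every two members of $T$ intersect in at least $s$ elements, and $T$ has the maximum possible cardinality among all such families. For $q\ge 2$ let $A_q$ be the set of all $|T|(q-1)^w$ words of $\mathbb{Z}_q^n$ whose support belongs to $T$. Then: (1) $A_2$ is a maximum anticode of diameter $2w-2s$ in $J_2(n,w)$; (2) for all sufficiently large $q$, $A_q$ is a maximum anticode of diameter $2w-s$ in $J_q(n,w)$; (3) if $C_q\subseteq J_q(n,w)$ is a code with minimum distance at least $2w-s+1$ and $|C_q|=|J_q(n,w)|/|A_q|$, then the binary code $C_2$ obtained from $C_q$ by replacing every nonzero symbol in every codeword by $1$ satisfies $|C_2|=|J_2(n,w)|/|A_2|$ and has minimum distance at least $2w-2s+2$ (so $C_2$ is a diameter perfect code in $J_2(n,w)$).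
   Context: $\mathbb{Z}_q=\{0,1,\dots,q-1\}$ is used merely as an alphabet; $[n]=\{1,\dots,n\}$. For $x\in\mathbb{Z}_q^n$, $\mathrm{supp}(x)=\{i: x_i\ne0\}$, $\mathrm{wt}(x)=|\mathrm{supp}(x)|$; $d(x,y)$ is the Hamming distance. $J_q(n,w)$ is the set of weight-$w$ words in $\mathbb{Z}_q^n$ with the Hamming metric. An anticode of diameter $D$ is a nonempty subset with all pairwise distances at most $D$; it is maximum if it has largest cardinality among such. A code of distance $d$ in $J_q(n,w)$ is a subset with at least two elements and pairwise distances at least $d$; it is diameter perfect if $|C|\cdot|A|=|J_q(n,w)|$ for some anticode $A$ of diameter less than $d$. *)

From mathcomp Require Import all_boot.
Set Implicit Arguments. Unset Strict Implicit. Unset Printing Implicit Defensive.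

Definition word (q n : nat) := {ffun 'I_n -> 'I_q}.

Definition supp (q n : nat) (x : word q n) : {set 'I_n} :=
  [set i | (x i : nat) != 0%N].

Definition wt (q n : nat) (x : word q n) : nat := #|supp x|.

Definition hdist (q n : nat) (x y : word q n) : nat := #|[set i | x i != y i]|.

Definition J (q n w : nat) : {set word q n} := [set x | wt x == w].

Definition is_anticode (q n w D : nat) (A : {set word q n}) : Prop :=
  A \subset J q n w /\ A != set0 /\
  (forall x y, x \in A -> y \in A -> hdist x y <= D).

Definition is_max_anticode (q n w D : nat) (A : {set word q n}) : Prop :=
  is_anticode w D A /\
  (forall B : {set word q n}, is_anticode w D B -> #|B| <= #|A|).

Definition is_code (q n w d : nat) (C : {set word q n}) : Prop :=
  C \subset J q n w /\ 2 <= #|C| /\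
  (forall x y, x \in C -> y \in C -> x != y -> d <= hdist x y).

Definition s_intersecting (n w s : nat) (T : {set {set 'I_n}}) : Prop :=
  (forall A, A \in T -> #|A| = w) /\
  (forall A B, A \in T -> B \in T -> s <= #|A :&: B|).

Definition max_s_intersecting (n w s : nat) (T : {set {set 'I_n}}) : Prop :=
  s_intersecting w s T /\
  (forall T' : {set {set 'I_n}}, s_intersecting w s T' -> #|T'| <= #|T|).

Definition Aq (q n : nat) (T : {set {set 'I_n}}) : {set word q n} :=
  [set x : word q n | supp x \in T].

Definition bit (b : bool) : 'I_2 := if b then ord_max else ord0.

Definition binarize (q n : nat) (x : word q n) : word 2 n :=
  [ffun i => bit ((x i : nat) != 0%N)].

Definition binarize_set (q n : nat) (C : {set word q n}) : {set word 2 n} :=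
  [set binarize x | x in C].

From mathcomp Require Import all_boot zify.

(** Binary words of weight [w] are determined by their supports, and their
   distance is [2w - 2|supp x :&: supp y|]; hence anticodes of diameter
   [2w - 2s] in [J_2(n,w)] are exactly the [s]-intersecting families, and so
   are the binarizations of codes of distance [2w - s + 1] in [J_q(n,w)].
   Over a large alphabet the diameter [2w - s] is weaker, but a support [S]
   carrying more than [w (q-1)^(w-1)] words of an anticode must meet the
   support of every word [x] of the anticode in at least [s] points:
   otherwise one of these words agrees with [x] nowhere on [supp x :&: S] and
   is at distance [|supp x :|: S| > 2w - s] from [x].  These heavy supports
   plus any further one form an [s]-intersecting family, and once
   [q - 1 >= 2^n w] all the light supports together carry at most
   [(q-1)^w] words, i.e. the share of one more member of [T]. *)

Lemma card_family_prod (aT rT : finType) (F : aT -> pred rT) :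
  #|family F| = \prod_(x : aT) #|F x|.
Proof. by rewrite card_family foldrE big_image. Qed.

Lemma card_bigcup_leq (T I : finType) (P : pred I) (F : I -> {set T}) :
  #|\bigcup_(i | P i) F i| <= \sum_(i | P i) #|F i|.
Proof.
elim/big_rec2: _ => [|i k X _ IH]; first by rewrite cards0.
by rewrite cardsU (leq_trans (leq_subr _ _)) // leq_add2l.
Qed.

Section Words.

Context {q n : nat}.
Implicit Types (x y : word q n) (S : {set 'I_n}) (B : {set word q n}).

Definition supp_fiber B S := [set x in B | supp x == S].

Lemma card_partition_supp B : #|B| = \sum_S #|supp_fiber B S|.
Proof.
rewrite -sum1_card (partition_big (@supp q n) xpredT) //=.
by apply: eq_bigr => S _; rewrite -sum1_card; apply: eq_bigl => x; rewrite !inE.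
Qed.

Lemma hdist_leq_cardU x y : hdist x y <= #|supp x :|: supp y|.
Proof.
apply/subset_leq_card/subsetP => i; rewrite !inE; apply: contraR.
by rewrite negb_or !negbK => /andP[/eqP xi0 /eqP yi0]; apply/eqP/val_inj; rewrite /= xi0 yi0.
Qed.

Lemma cardU_leq_hdist x y :
  {in supp x :&: supp y, forall i, x i != y i} -> #|supp x :|: supp y| <= hdist x y.
Proof.
move=> xy_diff; apply/subset_leq_card/subsetP => i iU; rewrite inE.
apply/negP => /eqP xy_i; suff : x i != y i by rewrite xy_i eqxx.
by apply: xy_diff; move: iU; rewrite !inE xy_i orbb andbb.
Qed.

Definition nz_at S (j : 'I_n) : pred 'I_q :=
  if j \in S then [pred a : 'I_q | (a : nat) != 0%N]
  else [pred a : 'I_q | (a : nat) == 0%N].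

Lemma supp_eq_family S x : (supp x == S) = (x \in family (nz_at S)).
Proof.
apply/eqP/familyP => [<- j|x_nz].
  by rewrite /nz_at inE; case: ifP => xj; rewrite inE ?xj ?(negbFE xj).
apply/setP => j; rewrite inE; have := x_nz j; rewrite /nz_at.
by case: (j \in S) => /= [|/eqP ->].
Qed.

Hypothesis q_gt0 : 0 < q.

Lemma card_ord_eq0 : #|[pred a : 'I_q | (a : nat) == 0%N]| = 1.
Proof. by apply: (@eq_card1 _ (Ordinal q_gt0)) => a; rewrite !inE. Qed.

Lemma card_ord_neq0 : #|[pred a : 'I_q | (a : nat) != 0%N]| = q - 1.
Proof.
rewrite subn1 -[in RHS](card_ord q) -(cardC1 (Ordinal q_gt0)).
by apply: eq_card => a; rewrite !inE.
Qed.

Lemma prod_card_nz_at S : \prod_j #|nz_at S j| = (q - 1) ^ #|S|.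
Proof.
rewrite -prod_nat_const [RHS]big_mkcond; apply: eq_bigr => j _.
by rewrite /nz_at; case: (j \in S); rewrite ?card_ord_neq0 ?card_ord_eq0.
Qed.

Lemma card_supp_eq S : #|[set x : word q n | supp x == S]| = (q - 1) ^ #|S|.
Proof.
rewrite -prod_card_nz_at -card_family_prod.
by apply: eq_card => x; rewrite inE supp_eq_family.
Qed.

Lemma card_supp_eq_fixed S i (c : 'I_q) : i \in S -> (c : nat) != 0%N ->
  (q - 1) * #|[set x : word q n | (supp x == S) && (x i == c)]| = (q - 1) ^ #|S|.
Proof.
move=> iS c_nz; pose G j : pred 'I_q := if j == i then xpred1 c else nz_at S j.
have -> : #|[set x : word q n | (supp x == S) && (x i == c)]| = #|family G|.
  apply: eq_card => x; rewrite inE supp_eq_family.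
  apply/andP/familyP => [[/familyP x_nz /eqP xi] j|xG].
    by rewrite /G; case: eqP => [->|_]; [rewrite unfold_in /= xi | exact: x_nz].
  split; last by have := xG i; rewrite /G eqxx unfold_in.
  apply/familyP => j; have := xG j; rewrite /G; case: eqP => // ->.
  by rewrite unfold_in => /eqP ->; rewrite /nz_at iS.
rewrite card_family_prod -prod_card_nz_at (bigD1 i) //= [RHS](bigD1 i) //=.
rewrite {1}/G eqxx (@eq_card1 _ c) // mul1n /nz_at iS card_ord_neq0; congr (_ * _).
by apply: eq_bigr => j /negbTE ji; rewrite /G ji.
Qed.

Lemma card_supp_in (F : {set {set 'I_n}}) w : {in F, forall S, #|S| = w} ->
  #|[set x : word q n | supp x \in F]| = #|F| * (q - 1) ^ w.
Proof.
move=> F_w; rewrite card_partition_supp (bigID (mem F)) /= [X in _ + X]big1 ?addn0.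
  rewrite -sum_nat_const; apply: eq_bigr => S SF; rewrite -(F_w _ SF) -card_supp_eq.
  by apply: eq_card => x; rewrite !inE; case: eqP => [->|]; rewrite ?SF ?andbF.
move=> S /negbTE SF; apply/eqP; rewrite cards_eq0; apply/eqP/setP => x.
by rewrite !inE; case: eqP => [->|]; rewrite ?SF ?andbF.
Qed.

(** Each word of the fiber agrees with [x] somewhere on [supp x :&: S], and
   prescribing one such value leaves [(q-1)^(|S|-1)] words. *)
Lemma card_supp_fiber_far B x S :
  (forall y, y \in supp_fiber B S -> hdist x y < #|supp x :|: S|) ->
  (q - 1) * #|supp_fiber B S| <= #|supp x :&: S| * (q - 1) ^ #|S|.
Proof.
move=> far; pose agree_at i := [set y : word q n | (supp y == S) && (y i == x i)].
have cover : supp_fiber B S \subset \bigcup_(i in supp x :&: S) agree_at i.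
  apply/subsetP => y yF; have := yF; rewrite inE => /andP[_ /eqP yS].
  case: (pickP [pred i | (i \in supp x :&: S) && (y i == x i)]) =>
      [i /andP[iI /eqP yi]|agree].
    by apply/bigcupP; exists i; rewrite // inE yS yi !eqxx.
  have := far y yF; rewrite -yS ltnNge cardU_leq_hdist // => i iI.
  by rewrite eq_sym; have := agree i; rewrite /= -yS iI => /negbT.
have := leq_trans (subset_leq_card cover) (card_bigcup_leq _ _ _ _).
rewrite -sum_nat_const => fiber_le; apply: leq_trans (leq_mul (leqnn (q - 1)) fiber_le) _.
rewrite big_distrr /=; apply: leq_sum => i; rewrite inE => /andP[xi iS].
by rewrite card_supp_eq_fixed //; move: xi; rewrite inE.
Qed.

End Words.

Lemma card_supp_J {q n w} {x : word q n} : x \in J q n w -> #|supp x| = w.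
Proof. by rewrite inE => /eqP. Qed.

Lemma card_J q n w : 0 < q -> #|J q n w| = 'C(n, w) * (q - 1) ^ w.
Proof.
move=> q_gt0; rewrite -[n in 'C(n, w)](card_ord n) -card_draws -(card_supp_in q_gt0) => [|S].
  by apply: eq_card => x; rewrite !inE.
by rewrite inE => /eqP.
Qed.

Lemma hdist_meet_leq_J {q n w} {x y : word q n} : x \in J q n w -> y \in J q n w ->
  hdist x y + #|supp x :&: supp y| <= 2 * w.
Proof.
move=> /card_supp_J xw /card_supp_J yw.
have := hdist_leq_cardU x y; have := cardsUI (supp x) (supp y); lia.
Qed.

Lemma hdist_bin {n} (x y : word 2 n) :
  hdist x y + 2 * #|supp x :&: supp y| = #|supp x| + #|supp y|.
Proof.
have -> : hdist x y = #|(supp x :|: supp y) :\: (supp x :&: supp y)|.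
  apply: eq_card => i; rewrite !inE.
  by case: (x i) (y i) => [[|[|a]] ?] [[|[|b]] ?].
rewrite cardsD (setIidPr (subset_trans (subsetIl _ _) (subsetUl _ _))).
have := cardsUI (supp x) (supp y); have := subset_leq_card (subsetIl (supp x) (supp y)).
have := subset_leq_card (subsetUl (supp x) (supp y)); lia.
Qed.

Lemma supp_bin_inj n : injective (@supp 2 n).
Proof.
move=> x y /setP xy; apply/ffunP => i; have := xy i; rewrite !inE.
by case: (x i) (y i) => [[|[|a]] ?] [[|[|b]] ?] //= _; apply: val_inj.
Qed.

Lemma supp_binarize {q n} (x : word q n) : supp (binarize x) = supp x.
Proof. by apply/setP => i; rewrite !inE ffunE /bit; case: ((x i : nat) != 0%N). Qed.

Section Intersecting.

Context {n w s : nat} {T : {set {set 'I_n}}}.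

Lemma Aq_subset_J q : s_intersecting w s T -> Aq q T \subset J q n w.
Proof. by case=> T_w _; apply/subsetP => x; rewrite !inE /wt => /T_w ->. Qed.

Lemma card_Aq q : 0 < q -> s_intersecting w s T -> #|Aq q T| = #|T| * (q - 1) ^ w.
Proof. by move=> q_gt0 [T_w _]; apply: card_supp_in. Qed.

Lemma max_s_intersecting_gt0 : s <= w -> w <= n -> max_s_intersecting w s T -> 0 < #|T|.
Proof.
move=> sw wn [_ T_max].
have : 0 < #|[set S : {set 'I_n} | #|S| == w]| by rewrite card_draws card_ord bin_gt0.
case/card_gt0P => S0; rewrite inE => /eqP S0w.
apply: leq_trans (T_max [set S0] _); first by rewrite cards1.
by split=> [S|S S']; rewrite !inE => /eqP -> //= /eqP ->; rewrite setIid S0w.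
Qed.

Lemma Aq_nonempty q : 1 < q -> s <= w -> w <= n -> max_s_intersecting w s T ->
  Aq q T != set0.
Proof.
move=> q_gt1 sw wn T_max; have [T_int _] := T_max.
rewrite -card_gt0 card_Aq ?(ltnW q_gt1) // muln_gt0 expn_gt0 subn_gt0 q_gt1 /= andbT.
exact: max_s_intersecting_gt0.
Qed.

End Intersecting.

Lemma Aq2_max_anticode n w s (T : {set {set 'I_n}}) :
  s <= w -> w <= n -> max_s_intersecting w s T ->
  is_max_anticode w (2 * w - 2 * s) (Aq 2 T).
Proof.
move=> sw wn T_max; have [T_int T_ge] := T_max; have [T_w T_s] := T_int.
split.
  split; first exact: Aq_subset_J T_int.
  split; first exact: Aq_nonempty 2 (ltnSn 1) sw wn T_max.
  move=> x y; rewrite !inE => xT yT; have := hdist_bin x y; have := T_s _ _ xT yT.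
  rewrite (T_w _ xT) (T_w _ yT); lia.
move=> B [BJ [_ B_diam]]; rewrite (card_Aq _ _ T_int) // exp1n muln1.
rewrite -(card_in_imset (in2W (@supp_bin_inj n))); apply: T_ge.
split=> [_ /imsetP[x /(subsetP BJ) /card_supp_J xw ->] //|].
move=> _ _ /imsetP[x xB ->] /imsetP[y yB ->]; have := B_diam _ _ xB yB.
have := hdist_bin x y; rewrite (card_supp_J (subsetP BJ _ xB)).
rewrite (card_supp_J (subsetP BJ _ yB)); lia.
Qed.

Section LargeAlphabet.

Context {q n w s : nat} {B : {set word q n}}.
Hypotheses (q_gt1 : 1 < q) (s_le_w : s <= w) (BJ : B \subset J q n w).
Hypothesis B_diam : forall x y, x \in B -> y \in B -> hdist x y <= 2 * w - s.

Let q_gt0 : 0 < q. Proof. exact: ltnW. Qed.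

Definition heavy_supps :=
  [set S | w * (q - 1) ^ w < (q - 1) * #|supp_fiber B S|].

Lemma card_supp_fiber_mem {S : {set 'I_n}} {x : word q n} :
  x \in supp_fiber B S -> #|S| = w.
Proof. by rewrite inE => /andP[/(subsetP BJ) /card_supp_J <- /eqP ->]. Qed.

Lemma card_supp_fiber_leq S : #|supp_fiber B S| <= (q - 1) ^ w.
Proof.
have [->|[x xF]] := set_0Vmem (supp_fiber B S); first by rewrite cards0.
rewrite -(card_supp_fiber_mem xF) -card_supp_eq //.
by apply/subset_leq_card/subsetP => y; rewrite !inE => /andP[].
Qed.

Lemma heavy_supp_witness {S : {set 'I_n}} :
  S \in heavy_supps -> exists2 y, y \in B & supp y = S.
Proof.
rewrite inE; have [->|[y]] := set_0Vmem (supp_fiber B S); first by rewrite cards0 muln0.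
by rewrite inE => /andP[yB /eqP yS]; exists y.
Qed.

Lemma card_heavy {S : {set 'I_n}} : S \in heavy_supps -> #|S| = w.
Proof. by case/heavy_supp_witness=> y /(subsetP BJ) /card_supp_J <- <-. Qed.

Lemma heavy_meet x S : x \in B -> S \in heavy_supps -> s <= #|supp x :&: S|.
Proof.
move=> xB S_heavy; rewrite leqNgt; apply/negP => meet_lt.
have Sw := card_heavy S_heavy; have xw := card_supp_J (subsetP BJ _ xB).
have far y : y \in supp_fiber B S -> hdist x y < #|supp x :|: S|.
  rewrite inE => /andP[yB _]; have := B_diam _ _ xB yB.
  have := cardsUI (supp x) S; rewrite xw Sw; lia.
have := card_supp_fiber_far q_gt0 B x S far; rewrite Sw => fiber_le.
move: S_heavy; rewrite inE; apply/negP; rewrite -leqNgt (leq_trans fiber_le) //.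
by rewrite leq_mul2r -xw subset_leq_card ?subsetIl ?orbT.
Qed.

Lemma heavy_s_intersecting x : x \in B -> s_intersecting w s (supp x |: heavy_supps).
Proof.
move=> xB; have xw := card_supp_J (subsetP BJ _ xB).
split=> [S /setU1P[-> //|/card_heavy //]|S S'].
move=> /setU1P[->|S_heavy] /setU1P[->|S'_heavy].
- by rewrite setIid xw.
- exact: heavy_meet.
- by rewrite setIC; exact: heavy_meet.
- by have [y yB <-] := heavy_supp_witness S_heavy; exact: heavy_meet.
Qed.

(** A heavy support carries at most [(q-1)^w] words and a light one at most
   [w (q-1)^(w-1)]; a light support in use adds one member to the
   [s]-intersecting family of heavy supports. *)
Lemma card_anticode_leq (T : {set {set 'I_n}}) :
  (forall T' : {set {set 'I_n}}, s_intersecting w s T' -> #|T'| <= #|T|) ->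
  #|{set 'I_n}| * w <= q - 1 -> B != set0 -> #|B| <= #|T| * (q - 1) ^ w.
Proof.
move=> T_ge big_q /set0Pn[x0 x0B]; set m := q - 1; set P := m ^ w.
have m_gt0 : 0 < m by rewrite subn_gt0.
rewrite -(leq_pmul2l m_gt0) mulnCA card_partition_supp big_distrr.
rewrite (bigID (mem heavy_supps)) /=.
have heavy_le : \sum_(S in heavy_supps) m * #|supp_fiber B S| <= #|heavy_supps| * (m * P).
  by rewrite -sum_nat_const; apply: leq_sum => S _; rewrite leq_mul2l card_supp_fiber_leq orbT.
case: (boolP [exists S, (S \notin heavy_supps) && (supp_fiber B S != set0)]).
  case/existsP => S /andP[S_light /set0Pn[x]]; rewrite inE => /andP[xB /eqP xS].
  have := T_ge _ (heavy_s_intersecting _ xB); rewrite cardsU1 xS S_light add1n => heavy_lt.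
  have light_le : \sum_(S | S \notin heavy_supps) m * #|supp_fiber B S| <= m * P.
    apply: leq_trans (_ : \sum_(S | S \notin heavy_supps) w * P <= _).
      by apply: leq_sum => S'; rewrite inE -leqNgt.
    rewrite sum_nat_const (leq_trans _ (leq_mul big_q (leqnn P))) // mulnA leq_mul2r.
    by rewrite leq_mul2r max_card !orbT.
  apply: leq_trans (leq_add heavy_le light_le) _.
  by rewrite addnC -mulSn leq_mul2r heavy_lt orbT.
rewrite negb_exists => /forallP no_light.
rewrite [X in _ + X]big1 ?addn0 => [|S S_light]; last first.
  by have := no_light S; rewrite S_light /= negbK => /eqP ->; rewrite cards0 muln0.
apply: leq_trans heavy_le _; rewrite leq_mul2r orbC.
by rewrite (leq_trans (subset_leq_card (subsetUr _ _)) (T_ge _ (heavy_s_intersecting _ x0B))).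
Qed.

End LargeAlphabet.

Lemma Aq_max_anticode_large q n w s (T : {set {set 'I_n}}) :
  1 < q -> s <= w -> w <= n -> max_s_intersecting w s T ->
  #|{set 'I_n}| * w <= q - 1 -> is_max_anticode w (2 * w - s) (Aq q T).
Proof.
move=> q_gt1 sw wn T_max big_q; have [T_int T_ge] := T_max; have [_ T_s] := T_int.
have AJ := Aq_subset_J q T_int.
split.
  split=> //; split; first exact: Aq_nonempty q_gt1 sw wn T_max.
  move=> x y xA yA; have := hdist_meet_leq_J (subsetP AJ _ xA) (subsetP AJ _ yA).
  rewrite !inE in xA yA; have := T_s _ _ xA yA; lia.
move=> B [BJ [B_nz B_diam]]; rewrite (card_Aq _ (ltnW q_gt1) T_int).
exact: card_anticode_leq q_gt1 sw BJ B_diam T T_ge big_q B_nz.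
Qed.

Section Binarization.

Context {q n w s : nat} {C : {set word q n}}.
Hypotheses (s_le_w : s <= w) (C_code : is_code w (2 * w - s + 1) C).

Lemma code_supp_meet_lt : {in C &, forall x y, x != y -> #|supp x :&: supp y| < s}.
Proof.
have [CJ [_ C_dist]] := C_code; move=> x y xC yC xy; have := C_dist _ _ xC yC xy.
have := hdist_meet_leq_J (subsetP CJ _ xC) (subsetP CJ _ yC); lia.
Qed.

Lemma binarize_code_inj : {in C &, injective (@binarize q n)}.
Proof.
move=> x y xC yC /(congr1 (@supp 2 n)); rewrite !supp_binarize => xy_supp; apply/eqP.
apply: contraT => /(code_supp_meet_lt _ _ xC yC); rewrite xy_supp setIid.
by rewrite (card_supp_J (subsetP C_code.1 _ yC)) ltnNge s_le_w.
Qed.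

Lemma binarize_code_dist x y : x \in binarize_set C -> y \in binarize_set C ->
  x != y -> 2 * w - 2 * s + 2 <= hdist x y.
Proof.
move=> /imsetP[x' x'C ->] /imsetP[y' y'C ->] xy.
have /(code_supp_meet_lt _ _ x'C y'C) : x' != y' by apply: contraNneq xy => ->.
have := hdist_bin (binarize x') (binarize y'); rewrite !supp_binarize.
rewrite (card_supp_J (subsetP C_code.1 _ x'C)) (card_supp_J (subsetP C_code.1 _ y'C)); lia.
Qed.

Lemma card_binarize_code (T : {set {set 'I_n}}) : 1 < q -> s_intersecting w s T ->
  #|C| * #|Aq q T| = #|J q n w| -> #|binarize_set C| * #|Aq 2 T| = #|J 2 n w|.
Proof.
move=> q_gt1 T_int; have q_gt0 := ltnW q_gt1.
rewrite /binarize_set (card_in_imset binarize_code_inj) (card_Aq q q_gt0 T_int).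
rewrite (card_Aq 2 isT T_int) !card_J // exp1n !muln1.
by rewrite mulnA => /eqP; rewrite eqn_pmul2r ?expn_gt0 ?subn_gt0 ?q_gt1 // => /eqP.
Qed.

End Binarization.

Theorem mainTheorem5 (n w s : nat) (T : {set {set 'I_n}}) :
  s <= w -> w <= n ->
  max_s_intersecting w s T ->
  [/\ is_max_anticode w (2 * w - 2 * s) (Aq 2 T),
      (exists q0, forall q, q0 <= q -> 2 <= q ->
          is_max_anticode w (2 * w - s) (Aq q T))
    & (forall q, 2 <= q -> forall C : {set word q n},
          is_code w (2 * w - s + 1) C ->
          #|C| * #|Aq q T| = #|J q n w| ->
          #|binarize_set C| * #|Aq 2 T| = #|J 2 n w| /\
          (forall x y, x \in binarize_set C -> y \in binarize_set C -> x != y ->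
             2 * w - 2 * s + 2 <= hdist x y))].
Proof.
move=> sw wn T_max; split.
- exact: Aq2_max_anticode.
- exists (#|{set 'I_n}| * w).+1 => q q_large q_gt1.
  by apply: Aq_max_anticode_large; rewrite // leq_subRL ?(ltnW q_gt1) // add1n.
- move=> q q_gt1 C C_code C_perfect; split.
    exact: card_binarize_code sw C_code T q_gt1 T_max.1 C_perfect.
  exact: binarize_code_dist.
Qed.
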